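(* Let $(S,T_1,*,\equiv',1',\sigma_1',\bar\sigma_1')$ be a link model. Then there is a well-defined map $f:B_\infty\to S$ satisfying $f(1)=1'$, $f(\sigma_i)=T_1^{i-1}(\sigma_1')$ for all $i\in\mathbb{N}$ (with $T_1^0$ the identity), and $f(b_1\cdot b_2)=f(b_1)*f(b_2)$ for all $b_1,b_2\in B_\infty$.
   Context: Consider a first-order language with signature $(\cdot,T,\equiv,1,\sigma,\bar\sigma)$: $\cdot$ binary function, $T$ unary function, $\equiv$ binary predicate, constants $1,\sigma,\bar\sigma$. The link axioms are: $\forall x,y,z\ x\cdot(y\cdot z)=(x\cdot y)\cdot z$; $\forall x\ 1\cdot x=x$; $\forall x\ x\cdot 1=x$; $\sigma\cdot\bar\sigma=\bar\sigma\cdot\sigma=1$; $\forall x,y\ T(x\cdot y)=T(x)\cdot T(y)$; $T(1)=1$; $\sigma\cdot T(\sigma)\cdot\sigma=T(\sigma)\cdot\sigma\cdot T(\sigma)$; $\forall b\ \sigma\cdot T(T(b))=T(T(b))\cdot\sigma$; $\equiv$ is reflexive, symmetric and transitive; $\forall x,y,z\ (y\cdot z=1\to x\equiv y\cdot x\cdot z)$; $\forall x\ x\equiv\sigma\cdot T(x)$; $\forall x\ x\equiv\bar\sigma\cdot T(x)$. A link model is a structure satisfying these axioms; in $(S,T_1,*,\equiv',1',\sigma_1',\bar\sigma_1')$ the symbols $\cdot,T,\equiv,1,\sigma,\bar\sigma$ are interpreted by $*,T_1,\equiv',1',\sigma_1',\bar\sigma_1'$. $B_\infty$ is the group generated by $\{\sigma_i\}_{i\in\mathbb{N}}$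 with relations $\sigma_i\sigma_j=\sigma_j\sigma_i$ for $i\ge j+2$ and $\sigma_i\sigma_{i+1}\sigma_i=\sigma_{i+1}\sigma_i\sigma_{i+1}$. *)

From Stdlib Require Import List.
Import ListNotations.

Record is_link_model {S : Type} (mul : S -> S -> S) (T : S -> S)
    (eqv : S -> S -> Prop) (one sig sigb : S) : Prop := {
  lm_assoc : forall x y z, mul x (mul y z) = mul (mul x y) z;
  lm_one_l : forall x, mul one x = x;
  lm_one_r : forall x, mul x one = x;
  lm_sig_inv_r : mul sig sigb = one;
  lm_sig_inv_l : mul sigb sig = one;
  lm_T_mul : forall x y, T (mul x y) = mul (T x) (T y);
  lm_T_one : T one = one;
  lm_braid : mul (mul sig (T sig)) sig = mul (mul (T sig) sig) (T sig);
  lm_far : forall b, mul sig (T (T b)) = mul (T (T b)) sig;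
  lm_eqv_refl : forall x, eqv x x;
  lm_eqv_sym : forall x y, eqv x y -> eqv y x;
  lm_eqv_trans : forall x y z, eqv x y -> eqv y z -> eqv x z;
  lm_conj : forall x y z, mul y z = one -> eqv x (mul (mul y x) z);
  lm_stab : forall x, eqv x (mul sig (T x));
  lm_stab_bar : forall x, eqv x (mul sigb (T x))
}.

(** The braid group B_infinity, presented by generators and relations:
    words in letters sigma_i^{+1} / sigma_i^{-1}, modulo the congruence
    generated by free cancellation and the braid relations.
    Convention: [Gen i true] is sigma_{i+1}, [Gen i false] its inverse
    (paper's generators sigma_1, sigma_2, ... ; 0-based here). *)
Inductive letter : Type := Gen (i : nat) (positive : bool).

Definition inv_letter (l : letter) : letter :=
  match l with Gen i b => Gen i (negb b) end.

Definition word := list letter.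

Definition sg (i : nat) : letter := Gen i true.

Inductive braid_rel : word -> word -> Prop :=
  | br_cancel : forall l, braid_rel [l; inv_letter l] []
  | br_far : forall i j, j + 2 <= i -> braid_rel [sg i; sg j] [sg j; sg i]
  | br_braid : forall i,
      braid_rel [sg i; sg (S i); sg i] [sg (S i); sg i; sg (S i)].

Inductive braid_eq : word -> word -> Prop :=
  | be_rel : forall u v w1 w2, braid_rel w1 w2 ->
      braid_eq (u ++ w1 ++ v) (u ++ w2 ++ v)
  | be_refl : forall w, braid_eq w w
  | be_sym : forall w1 w2, braid_eq w1 w2 -> braid_eq w2 w1
  | be_trans : forall w1 w2 w3, braid_eq w1 w2 -> braid_eq w2 w3 -> braid_eq w1 w3.

(* The evaluation of a word letter by letter, sending sigma_(i+1)^(+-1) to T^i(sigma^(+-1)), is a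
   monoid map from words to S. Since T^i is a monoid endomorphism, each defining relation of
   B_infinity is the image under some T^j of one of the axioms sigma sigmabar = 1,
   sigma T(sigma) sigma = T(sigma) sigma T(sigma) or sigma T^2(b) = T^2(b) sigma, so the evaluation
   factors through the congruence braid_eq. *)
From Stdlib Require Import List Lia Arith.
Import ListNotations.

Section WordEvaluation.

Variables (S : Type) (mul : S -> S -> S) (T : S -> S) (one sig sigb : S).

Hypothesis mulA : forall x y z, mul x (mul y z) = mul (mul x y) z.
Hypothesis mul1l : forall x, mul one x = x.
Hypothesis mul1r : forall x, mul x one = x.
Hypothesis T_mul : forall x y, T (mul x y) = mul (T x) (T y).
Hypothesis T_one : T one = one.

Definition letter_value (l : letter) : S :=
  match l with
  | Gen i true => Nat.iter i T sig
  | Gen i false => Nat.iter i T sigb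
  end.

Definition word_value (w : word) : S :=
  fold_right (fun l acc => mul (letter_value l) acc) one w.

Lemma iter_T_mul n x y :
  Nat.iter n T (mul x y) = mul (Nat.iter n T x) (Nat.iter n T y).
Proof. induction n as [|n IHn]; simpl; [reflexivity|now rewrite IHn, T_mul]. Qed.

Lemma iter_T_one n : Nat.iter n T one = one.
Proof. induction n as [|n IHn]; simpl; [reflexivity|now rewrite IHn, T_one]. Qed.

Lemma word_value_app w1 w2 :
  word_value (w1 ++ w2) = mul (word_value w1) (word_value w2).
Proof.
  induction w1 as [|l w1 IHw1]; simpl.
  - now rewrite mul1l.
  - now rewrite IHw1, mulA.
Qed.

Hypothesis sig_sigb : mul sig sigb = one.
Hypothesis sigb_sig : mul sigb sig = one.
Hypothesis braid : mul (mul sig (T sig)) sig = mul (mul (T sig) sig) (T sig).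
Hypothesis far_comm : forall b, mul sig (T (T b)) = mul (T (T b)) sig.

Lemma word_value_braid_rel w1 w2 : braid_rel w1 w2 -> word_value w1 = word_value w2.
Proof.
  intros Hrel; destruct Hrel as [[i []] | i j Hij | i]; simpl; rewrite !mul1r.
  - now rewrite <- iter_T_mul, sig_sigb, iter_T_one.
  - now rewrite <- iter_T_mul, sigb_sig, iter_T_one.
  - replace i with (j + (2 + (i - j - 2))) by lia.
    rewrite !Nat.iter_add, <- !iter_T_mul; simpl.
    now rewrite far_comm.
  - rewrite !mulA, <- !Nat.iter_swap, <- !iter_T_mul.
    now rewrite braid.
Qed.

Lemma word_value_braid_eq w1 w2 : braid_eq w1 w2 -> word_value w1 = word_value w2.
Proof.
  intros Heq; induction Heq as [u v w1 w2 Hrel| | |]; try congruence.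
  now rewrite !word_value_app, (word_value_braid_rel _ _ Hrel).
Qed.

End WordEvaluation.

Theorem lemma6p3 (S : Type) (mul : S -> S -> S) (T : S -> S)
    (eqv : S -> S -> Prop) (one sig sigb : S) :
  is_link_model mul T eqv one sig sigb ->
  exists f : word -> S,
    (forall w1 w2, braid_eq w1 w2 -> f w1 = f w2) /\
    f [] = one /\
    (forall i : nat, f [sg i] = Nat.iter i T sig) /\
    (forall w1 w2, f (w1 ++ w2) = mul (f w1) (f w2)).
Proof.
  intros [mulA mul1l mul1r sig_sigb sigb_sig T_mul T_one braid far_comm _ _ _ _ _ _].
  exists (word_value S mul T one sig sigb); repeat split.
  - intros w1 w2; apply word_value_braid_eq; assumption.
  - intros i; apply mul1r.
  - intros w1 w2; apply word_value_app; assumption.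
Qed.
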